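(* Let $x=\tilde w\ell$ with $\tilde w\in\widetilde W$ satisfying $\tilde w\alpha>0$ for all $\alpha\in\Delta(L)$ and $\ell=wu$ with $w\in W_L$, $u\in\Upsilon$. Then $$B_\phi\cap x^{-1}I^-x=B_\phi\cap\ell^{-1}B_L^-\ell=\{tv\in T_\phi U_\phi:\ (t^{-1}ut)vu^{-1}\in U_L\cap w^{-1}U_L^-w\}.$$
   Context: $k$ a field, $G=\mathrm{GL}_n$; $I^-=\{g\in\mathrm{GL}_n(k[s^{-1}]):g|_{s^{-1}=0}\text{ lower triangular}\}$, $I\subset\mathrm{GL}_n(k[[s]])$ preimage of upper triangular matrices; affine roots $\alpha_{ij}+r$ with root subgroups $\{1+as^rE_{ij}\}$, positive if contained in $I$; $\widetilde W$ = monomial matrices $w\,\mathrm{diag}(s^{\lambda_i})$. Fix $1\le d\le n$, $m=n-d$. $L\subset\mathrm{GL}_n(k((s)))$ is generated by the diagonal torus $T(k)$ and $\{1+as^{(i-j)/d}E_{ij}\}$ for $i\equiv j\bmod d$, $i\neq j$; $L\simeq G_0=\{g\in\mathrm{GL}_n(k):g_{ij}=0\text{ unless }i\equiv j\bmod d\}$ via $s^{(i-j)/d}E_{ij}\mapsto E_{ij}$. $\Delta(L)=\{\alpha_{i,i+d}-1\}$; $W_L$ the Weyl group of $L$ (its permutation matrices); $U_L$ (resp. $U_L^-$) generated by the root subgroups of $L$ with $i<j$ (resp. $i>j$); $B_L^-=T(k)U_L^-$. $B_\phi\subset L$ corresponds to $\{\mathrm{diag}(\mathrm{Id}_d,b):b\in\mathrm{GL}_m\text{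 upper triangular}\}\cap G_0$, with torus $T_\phi$ and unipotent radical $U_\phi$. $\Upsilon=\prod U_\alpha$ over the root subgroups of $L$ with finite part $\alpha_{ij}$, $1\le i\le d$, $i+d\le j\le n$, $j\equiv i\bmod d$. *)

From HB Require Import structures.
From mathcomp Require Import all_boot all_order all_fingroup all_algebra.
Set Implicit Arguments. Unset Strict Implicit. Unset Printing Implicit Defensive.
Import Order.TTheory GRing.Theory Num.Theory.
Local Open Scope ring_scope.

(* Ambient field: F = k(s), the field of rational functions.  All matrices
   occurring in the statement have entries in k[s, s^-1], which embeds both in
   k(s) and in k((s)). *)
Section Defs.
Variable k : fieldType.
Local Notation F := {fraction {poly k}}.

Definition cst (c : k) : F := tofrac (c%:P).
Definition svar : F := tofrac ('X : {poly k}).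
Definition ev_inv (p : {poly k}) : F := (map_poly cst p).[svar^-1].

Variable n : nat.

Definition Emx (i j : 'I_n) : 'M[F]_n := delta_mx i j.

Definition rootelt (i j : 'I_n) (r : int) (a : k) : 'M[F]_n :=
  1%:M + (cst a * svar ^ r) *: Emx i j.

(* ---- the Iwahori I: preimage in GL_n(k[[s]]) of upper triangular matrices.
   An element of k(s) lies in k[[s]] iff it can be written p/q with q(0) <> 0. *)
Definition in_ps (f : F) : Prop :=
  exists p q : {poly k}, q.[0] != 0 /\ f = tofrac p / tofrac q.
Definition mx_ps (g : 'M[F]_n) : Prop := forall i j, in_ps (g i j).
Definition in_I (g : 'M[F]_n) : Prop :=
  [/\ g \in unitmx, mx_ps g, mx_ps (invmx g) &
   (* reduction mod s is upper triangular: *)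
   exists (P : 'M[{poly k}]_n) (q : {poly k}), q.[0] != 0 /\
     g = (tofrac q)^-1 *: map_mx (@tofrac {poly k}) P /\
     (forall i j : 'I_n, (j < i)%N -> (P i j).[0] = 0)].

(* ---- I^- = { g in GL_n(k[s^-1]) : g|_{s^-1 = 0} lower triangular } *)
Definition mx_kinv (g : 'M[F]_n) : Prop :=
  exists P : 'M[{poly k}]_n, g = map_mx ev_inv P.
Definition in_Iminus (g : 'M[F]_n) : Prop :=
  [/\ g \in unitmx, mx_kinv (invmx g) &
   exists P : 'M[{poly k}]_n, g = map_mx ev_inv P /\
     (forall i j : 'I_n, (i < j)%N -> (P i j).[0] = 0)].

(* ---- extended affine Weyl group: monomial matrices w diag(s^lambda_i) *)
Definition tW (sigma : 'S_n) (lam : 'I_n -> int) : 'M[F]_n :=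
  perm_mx sigma *m diag_mx (\row_i (svar ^ lam i)).

Variable d : nat.

(* ---- G_0 and the isomorphism iota : G_0 -> L,  E_ij |-> s^((i-j)/d) E_ij *)
Definition congr_d (i j : 'I_n) : bool := (i == j %[mod d])%N.
Definition in_G0 (g : 'M[k]_n) : Prop :=
  g \in unitmx /\ forall i j, ~~ congr_d i j -> g i j = 0.
Definition iotaL (g : 'M[k]_n) : 'M[F]_n :=
  \matrix_(i, j) (cst (g i j) * svar ^ ((i%:Z - j%:Z) %/ d%:Z)%Z).

Definition in_L (x : 'M[F]_n) : Prop := exists g, in_G0 g /\ x = iotaL g.
Definition in_T (x : 'M[F]_n) : Prop :=
  exists t : 'I_n -> k, (forall i, t i != 0) /\ x = diag_mx (\row_i cst (t i)).

(* Weyl group of L: (images in L of) the permutation matrices of G_0 *)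
Definition in_WL (x : 'M[F]_n) : Prop :=
  exists sigma : 'S_n, in_G0 (perm_mx sigma) /\ x = iotaL (perm_mx sigma).
Definition in_UL (x : 'M[F]_n) : Prop :=
  exists g, in_G0 g /\ x = iotaL g /\
    (forall i, g i i = 1) /\ (forall i j : 'I_n, (j < i)%N -> g i j = 0).
Definition in_ULm (x : 'M[F]_n) : Prop :=
  exists g, in_G0 g /\ x = iotaL g /\
    (forall i, g i i = 1) /\ (forall i j : 'I_n, (i < j)%N -> g i j = 0).
Definition in_BLm (x : 'M[F]_n) : Prop :=
  exists t u, in_T t /\ in_ULm u /\ x = t *m u.

(* B_phi : {diag(Id_d, b) : b in GL_m upper triangular} cap G_0, and its
   torus T_phi and unipotent radical U_phi (0-based indices: first d are Id) *)
Definition idblock (g : 'M[k]_n) : Prop :=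
  forall i j : 'I_n, ((i < d)%N || (j < d)%N) -> g i j = (i == j)%:R.
Definition in_Bphi (x : 'M[F]_n) : Prop :=
  exists g, in_G0 g /\ x = iotaL g /\ idblock g /\
    (forall i j : 'I_n, (j < i)%N -> g i j = 0).
Definition in_Tphi (x : 'M[F]_n) : Prop :=
  exists g, in_G0 g /\ x = iotaL g /\ idblock g /\
    (forall i j : 'I_n, i != j -> g i j = 0).
Definition in_Uphi (x : 'M[F]_n) : Prop :=
  exists g, in_G0 g /\ x = iotaL g /\ idblock g /\
    (forall i, g i i = 1) /\ (forall i j : 'I_n, (j < i)%N -> g i j = 0).

(* Upsilon = product of root subgroups of L with finite part alpha_ij,
   1 <= i <= d, i + d <= j <= n, j = i mod d (here 0-based: i < d, i + d <= j) *)
Definition in_Upsilon (x : 'M[F]_n) : Prop :=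
  exists g, in_G0 g /\ x = iotaL g /\
    (forall i j : 'I_n, g i j = (i == j)%:R \/
       [/\ i != j, (i < d)%N, (i + d <= j)%N & congr_d i j]).
End Defs.

(* Every element of L is iota_mx d A for some A in G_0, where iota_mx is the
   conjugate of the constant embedding by diag(s^(i/d)); then l g l^-1 is
   iota_mx d Z with Z = (wu) G (wu)^-1.  Conjugating by tw = sigma diag(s^lam)
   multiplies the (i, j) entry by s^(mu i - mu j) (up to sigma), where
   mu i = lam i + i/d, and the hypothesis on the simple roots alpha_(i,i+d) - 1
   of L propagates along the chains i, i + d, i + 2d, ... to show that tw maps
   every positive root of L to a positive affine root.  Hence tw (l g l^-1) tw^-1
   lies in I^- exactly when Z is lower triangular, which is also exactly when
   l g l^-1 lies in B_L^-.  For the second equality write g = t v with t the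
   diagonal part of g: then Z = (w t w^-1) (w Y w^-1) with Y = (t^-1 u t) v u^-1
   unipotent upper triangular, and w t w^-1 is diagonal, so Z is lower triangular
   iff w Y w^-1 is. *)

From HB Require Import structures.
From mathcomp Require Import all_boot all_order all_fingroup all_algebra.
From mathcomp Require Import zify ring.
Import Order.TTheory GRing.Theory Num.Theory.
Local Open Scope ring_scope.
Set Implicit Arguments. Unset Strict Implicit. Unset Printing Implicit Defensive.

Section HornerMxClosed.
Variables (R : comUnitRingType) (n : nat) (P : 'M[R]_n.+1 -> Prop).
Hypotheses (P1 : P 1%:M) (PD : forall A B, P A -> P B -> P (A + B))
  (PZ : forall a A, P A -> P (a *: A)) (PM : forall A B, P A -> P B -> P (A *m B)).

Lemma horner_mx_closed A q : P A -> P (horner_mx A q).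
Proof.
move=> PA; elim/poly_ind: q => [|q c Pq].
  by rewrite rmorph0 -(scale0r 1%:M); apply: PZ.
by rewrite rmorphD rmorphM /= horner_mx_X horner_mx_C -scalemx1; apply: PD (PM _ _) (PZ _ _).
Qed.
End HornerMxClosed.

Lemma invmx_closed (R : comUnitRingType) (n : nat) (P : 'M[R]_n -> Prop) :
  P 1%:M -> (forall A B, P A -> P B -> P (A + B)) ->
  (forall a A, P A -> P (a *: A)) -> (forall A B, P A -> P B -> P (A *m B)) ->
  forall A, P A -> P (invmx A).
Proof.
case: n P => [|n] P P1 PD PZ PM A PA; first by rewrite [invmx A]flatmx0 -(flatmx0 A).
have [uA|nuA] := boolP (A \in unitmx); last by rewrite invmx_out.
(* By Cayley-Hamilton, invmx A is a polynomial in A. *)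
set p := char_poly A; set q := drop_poly 1 p.
have p0E : take_poly 1 p = (p`_0)%:P.
  by apply/polyP => i; rewrite coef_take_poly coefC; case: i.
have p0u : p`_0 \is a GRing.unit.
  by rewrite char_poly_det unitrM unitrX ?unitrN ?unitr1 // -unitmxE.
have AqE : A *m horner_mx A q = - (p`_0)%:M.
  have CH := Cayley_Hamilton A; rewrite -/p -(poly_take_drop 1 p) p0E expr1 in CH.
  move: CH; rewrite mulrC rmorphD rmorphM /= horner_mx_C horner_mx_X -mulmxE => /eqP.
  by rewrite addrC addr_eq0 => /eqP.
have -> : invmx A = - (p`_0)^-1 *: horner_mx A q.
  apply: (can_inj (mulKmx uA)); rewrite mulmxV // -scalemxAr AqE scaleNr scalerN opprK.
  by rewrite scale_scalar_mx mulVr.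
by apply: (PZ); apply: horner_mx_closed.
Qed.

Section MatrixInverse.
Variables (R : comUnitRingType) (n : nat).
Implicit Types (A B : 'M[R]_n) (r : 'rV[R]_n) (s : 'S_n).

Lemma invmx_mulmx1 A B : A *m B = 1%:M -> invmx A = B.
Proof. by move=> AB; have [uA _] := mulmx1_unit AB; rewrite -[invmx A]mulmx1 -AB mulKmx. Qed.

Lemma invmxM A B : A \in unitmx -> B \in unitmx -> invmx (A *m B) = invmx B *m invmx A.
Proof.
by move=> uA uB; apply: invmx_mulmx1; rewrite -mulmxA (mulmxA B) mulmxV // mul1mx mulmxV.
Qed.

Lemma invmx_conj A B : A \in unitmx -> B \in unitmx ->
  invmx (A *m B *m invmx A) = A *m invmx B *m invmx A.
Proof. by move=> uA uB; rewrite !invmxM ?unitmx_mul ?uA ?uB ?unitmx_inv // invmxK mulmxA. Qed.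

Lemma conj_mulmx A B C : A \in unitmx -> B \in unitmx ->
  A *m B *m C *m invmx (A *m B) = A *m (B *m C *m invmx B) *m invmx A.
Proof. by move=> uA uB; rewrite invmxM // !mulmxA. Qed.

Lemma mulmx_diag_mxV r : (forall i, r 0 i \is a GRing.unit) ->
  diag_mx r *m diag_mx (\row_i (r 0 i)^-1) = 1%:M.
Proof. by move=> ur; rewrite mulmx_diag; apply/matrixP => i j; rewrite !mxE divrr. Qed.

Lemma diag_mx_unit r : (forall i, r 0 i \is a GRing.unit) -> diag_mx r \in unitmx.
Proof. by move/mulmx_diag_mxV/mulmx1_unit => []. Qed.

Lemma invmx_diag_mx r : (forall i, r 0 i \is a GRing.unit) ->
  invmx (diag_mx r) = diag_mx (\row_i (r 0 i)^-1).
Proof. by move/mulmx_diag_mxV/invmx_mulmx1. Qed.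

Lemma invmx_perm_mx s : invmx (perm_mx s : 'M[R]_n) = perm_mx s^-1.
Proof. by apply: invmx_mulmx1; rewrite -perm_mxM mulgV perm_mx1. Qed.

Lemma conj_perm_mxE s A i j : (perm_mx s *m A *m invmx (perm_mx s)) i j = A (s i) (s j).
Proof. by rewrite invmx_perm_mx -row_permE -col_permE !mxE. Qed.

Lemma conj_perm_diag_mx s r :
  perm_mx s *m diag_mx r *m invmx (perm_mx s) = diag_mx (\row_i r 0 (s i)).
Proof. by apply/matrixP => i j; rewrite conj_perm_mxE !mxE (inj_eq perm_inj). Qed.

Lemma conj_perm_diag_mxE s r A i j : (forall i, r 0 i \is a GRing.unit) ->
  (perm_mx s *m diag_mx r *m A *m invmx (perm_mx s *m diag_mx r)) i j =
  r 0 (s i) * A (s i) (s j) / r 0 (s j).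
Proof.
move=> ur; rewrite invmxM ?unitmx_perm ?diag_mx_unit // invmx_diag_mx // !mulmxA.
rewrite -[X in X *m invmx _]mulmxA -[X in X *m invmx _]mulmxA conj_perm_mxE.
by rewrite mul_diag_mx mxE mul_mx_diag !mxE mulrA.
Qed.
End MatrixInverse.

Definition cotransitive n (Q : rel 'I_n) := forall i l j, Q i j -> Q i l || Q l j.
Definition total_on_neq n (Q : rel 'I_n) := forall i l, i != l -> Q i l || Q l i.

(* Matrices vanishing on an irreflexive cotransitive relation Q (one whose
   complement is a preorder) form a subalgebra that is closed under inversion. *)
Section VanishingPattern.
Variables (R : comUnitRingType) (n : nat) (Q : rel 'I_n).

Definition vanishes_on (A : 'M[R]_n) := forall i j, Q i j -> A i j = 0.

Hypothesis Q_irr : irreflexive Q.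
Hypothesis Q_cotrans : cotransitive Q.

Lemma vanishes_on_diag_mx (r : 'rV[R]_n) : vanishes_on (diag_mx r).
Proof. by move=> i j; rewrite mxE; case: eqP => // ->; rewrite Q_irr. Qed.

Lemma vanishes_on1 : vanishes_on 1%:M.
Proof. by move=> i j; rewrite mxE; case: eqP => // ->; rewrite Q_irr. Qed.

Lemma vanishes_onD A B : vanishes_on A -> vanishes_on B -> vanishes_on (A + B).
Proof. by move=> hA hB i j Qij; rewrite mxE hA ?hB ?addr0. Qed.

Lemma vanishes_onZ a A : vanishes_on A -> vanishes_on (a *: A).
Proof. by move=> hA i j Qij; rewrite mxE hA ?mulr0. Qed.

Lemma vanishes_onM A B : vanishes_on A -> vanishes_on B -> vanishes_on (A *m B).
Proof.
move=> hA hB i j Qij; rewrite mxE big1 // => l _.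
by case/orP: (Q_cotrans l Qij) => [/hA|/hB] ->; rewrite ?mul0r ?mulr0.
Qed.

Lemma vanishes_on_invmx A : vanishes_on A -> vanishes_on (invmx A).
Proof.
apply: invmx_closed.
- exact: vanishes_on1.
- exact: vanishes_onD.
- exact: vanishes_onZ.
- exact: vanishes_onM.
Qed.

Hypothesis Q_total : total_on_neq Q.

Lemma vanishes_on_mulmx_diag A B i :
  vanishes_on A -> vanishes_on B -> (A *m B) i i = A i i * B i i.
Proof.
move=> hA hB; rewrite mxE (bigD1 i) //= big1 ?addr0 // => l; rewrite eq_sym => /Q_total.
by case/orP => [/hA|/hB] ->; rewrite ?mul0r ?mulr0.
Qed.

Lemma vanishes_on_invmx_diag A i :
  vanishes_on A -> A \in unitmx -> A i i * (invmx A) i i = 1.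
Proof.
move=> hA uA; rewrite -vanishes_on_mulmx_diag //; last exact: vanishes_on_invmx.
by rewrite mulmxV // mxE eqxx.
Qed.

Lemma vanishes_on_diag_unit A i : vanishes_on A -> A \in unitmx -> A i i \is a GRing.unit.
Proof. by move=> hA uA; apply/unitrPr; exists (invmx A i i); apply: vanishes_on_invmx_diag. Qed.
End VanishingPattern.

Lemma vanishes_on_diag_mulmx (R : comUnitRingType) n (Q : rel 'I_n) (r : 'rV[R]_n) A :
  (forall i, r 0 i \is a GRing.unit) ->
  vanishes_on Q (diag_mx r *m A) <-> vanishes_on Q A.
Proof.
move=> ur; split=> hA i j Qij; last by rewrite mul_diag_mx mxE hA ?mulr0.
by move: (hA i j Qij); rewrite mul_diag_mx mxE => /(congr1 ( *%R (r 0 i)^-1)); rewrite mulKr ?mulr0.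
Qed.

Section DiagonalPart.
Variables (R : comUnitRingType) (n : nat) (Q : rel 'I_n).
Hypotheses (Q_irr : irreflexive Q) (Q_cotrans : cotransitive Q) (Q_total : total_on_neq Q).

Definition diag_part (A : 'M[R]_n) := diag_mx (\row_i A i i).

Lemma diag_part_unit A : vanishes_on Q A -> A \in unitmx -> diag_part A \in unitmx.
Proof. by move=> hA uA; apply: diag_mx_unit => i; rewrite mxE (vanishes_on_diag_unit Q_irr). Qed.

Definition unitriangular (A : 'M[R]_n) := (forall i, A i i = 1) /\ vanishes_on Q A.

Lemma unitriangularM A B : unitriangular A -> unitriangular B -> unitriangular (A *m B).
Proof.
move=> [A1 hA] [B1 hB]; split=> [i|]; last exact: vanishes_onM.
by rewrite (vanishes_on_mulmx_diag Q_total) // A1 B1 mulr1.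
Qed.

Lemma unitriangular_invmx A : A \in unitmx -> unitriangular A -> unitriangular (invmx A).
Proof.
move=> uA [A1 hA]; split=> [i|]; last exact: vanishes_on_invmx.
by have := vanishes_on_invmx_diag Q_irr Q_cotrans Q_total i hA uA; rewrite A1 mul1r.
Qed.

Lemma unitriangular_conj T A : vanishes_on Q T -> T \in unitmx -> unitriangular A ->
  unitriangular (invmx T *m A *m T).
Proof.
move=> hT uT [A1 hA]; have hTi := vanishes_on_invmx Q_irr Q_cotrans hT.
split=> [i|]; last by do 2 apply: vanishes_onM => //.
rewrite !(vanishes_on_mulmx_diag Q_total) //; last exact: vanishes_onM.
by rewrite A1 mulr1 mulrC (vanishes_on_invmx_diag Q_irr Q_cotrans Q_total).
Qed.

Lemma unipotent_part_unitriangular A : vanishes_on Q A -> A \in unitmx ->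
  unitriangular (invmx (diag_part A) *m A).
Proof.
move=> hA uA; have Aii_u j := vanishes_on_diag_unit Q_irr Q_cotrans Q_total j hA uA.
split; last by apply: vanishes_onM => //; apply/vanishes_on_invmx/vanishes_on_diag_mx.
move=> i; rewrite invmx_diag_mx => [|j]; last by rewrite mxE.
by rewrite mul_diag_mx !mxE mulVr.
Qed.
End DiagonalPart.

Definition strictly_above n : rel 'I_n := fun i j => (i < j)%N.
Definition strictly_below n : rel 'I_n := fun i j => (j < i)%N.
Definition off_diagonal n : rel 'I_n := fun i j => i != j.

Section Relations.
Variables n d : nat.

Definition incongr_d : rel 'I_n := fun i j => ~~ congr_d d i j.

Lemma strictly_above_irr : irreflexive (@strictly_above n).
Proof. exact: ltnn. Qed.

Lemma strictly_above_cotrans : cotransitive (@strictly_above n).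
Proof. by move=> i l j; rewrite /strictly_above; case: (ltnP i l) => //= /leq_ltn_trans; apply. Qed.

Lemma strictly_above_total : total_on_neq (@strictly_above n).
Proof. by move=> i l; rewrite /strictly_above neq_ltn. Qed.

Lemma strictly_below_irr : irreflexive (@strictly_below n).
Proof. exact: ltnn. Qed.

Lemma strictly_below_cotrans : cotransitive (@strictly_below n).
Proof. by move=> i l j; rewrite /strictly_below orbC; apply: strictly_above_cotrans. Qed.

Lemma strictly_below_total : total_on_neq (@strictly_below n).
Proof. by move=> i l; rewrite /strictly_below orbC; apply: strictly_above_total. Qed.

Lemma off_diagonal_irr : irreflexive (@off_diagonal n).
Proof. by move=> i; rewrite /off_diagonal eqxx. Qed.

Lemma off_diagonal_cotrans : cotransitive (@off_diagonal n).
Proof.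
by move=> i l j; apply: contraR; rewrite negb_or !negbK => /andP[/eqP-> /eqP->].
Qed.

Lemma off_diagonal_total : total_on_neq (@off_diagonal n).
Proof. by move=> i l; rewrite /off_diagonal => ->. Qed.

Lemma incongr_d_irr : irreflexive incongr_d.
Proof. by move=> i; rewrite /incongr_d /congr_d eqxx. Qed.

Lemma incongr_d_cotrans : cotransitive incongr_d.
Proof.
move=> i l j; rewrite /incongr_d /congr_d; apply: contraR.
by rewrite negb_or !negbK => /andP[/eqP-> /eqP->].
Qed.
End Relations.

Lemma diag_partE (R : comUnitRingType) n (A : 'M[R]_n) :
  vanishes_on (@off_diagonal n) A -> diag_part A = A.
Proof. by move=> hA; apply/matrixP => i j; rewrite !mxE; case: eqVneq => [->|/hA->]. Qed.

Lemma vanishes_on_diagonal (R : comUnitRingType) n (Q : rel 'I_n) (A : 'M[R]_n) :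
  irreflexive Q -> vanishes_on (@off_diagonal n) A -> vanishes_on Q A.
Proof. by move=> Q_irr /diag_partE <-; apply: vanishes_on_diag_mx. Qed.

Local Notation lower := (vanishes_on (@strictly_above _)).
Local Notation upper := (vanishes_on (@strictly_below _)).
Local Notation diagonal := (vanishes_on (@off_diagonal _)).

#[local] Hint Extern 0 (irreflexive _) => first [exact: strictly_above_irr
  | exact: strictly_below_irr | exact: off_diagonal_irr | exact: incongr_d_irr] : core.
#[local] Hint Extern 0 (cotransitive _) => first [exact: strictly_above_cotrans
  | exact: strictly_below_cotrans | exact: off_diagonal_cotrans | exact: incongr_d_cotrans] : core.
#[local] Hint Extern 0 (total_on_neq _) => first [exact: strictly_above_total
  | exact: strictly_below_total | exact: off_diagonal_total] : core.

Section RationalFunctions.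
Variable k : fieldType.
Local Notation F := {fraction {poly k}}.
Local Notation s := (svar k).

Definition cstm : {rmorphism k -> F} := @tofrac {poly k} \o @polyC k.

Lemma cstE c : cst c = cstm c. Proof. by []. Qed.

Lemma svar_neq0 : s != 0.
Proof. by rewrite tofrac_eq0 polyX_eq0. Qed.

Lemma svarXn m : s ^+ m = tofrac 'X^m.
Proof. by rewrite tofracXn. Qed.

Lemma svar_expz_ps (c : int) (p q : {poly k}) : q.[0] != 0 ->
  s ^ c = (tofrac q)^-1 * tofrac p -> 0 <= c /\ (p.[0] = 0 -> 0 < c).
Proof.
move=> q0 E; have qF0 : tofrac q != 0 :> F.
  by rewrite tofrac_eq0; apply: contraNneq q0 => ->; rewrite horner0.
have {}E : tofrac p = tofrac q * s ^ c by rewrite E mulVKf.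
case: c E => m E.
  have {E} -> : p = q * 'X^m by apply/eqP; rewrite -tofrac_eq tofracM -svarXn E.
  split=> //; rewrite hornerM hornerXn; case: m => // /eqP.
  by rewrite expr0 mulr1 (negbTE q0).
have /eqP : tofrac q = tofrac (p * 'X^(m.+1)).
  by rewrite tofracM -svarXn E NegzE -invr_expz mulfVK ?expf_neq0 ?svar_neq0.
by rewrite tofrac_eq => /eqP qE; move: q0; rewrite qE hornerM hornerXn expr0n mulr0 eqxx.
Qed.

Lemma ev_invE p : ev_inv p = (map_poly cstm p).[s^-1].
Proof. by []. Qed.

Lemma ev_invZXn (c : k) m : ev_inv (c *: 'X^m) = cst c * s ^ (- m%:Z).
Proof.
rewrite ev_invE.
by rewrite map_polyZ map_polyXn hornerZ hornerXn exprVn exprnN.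
Qed.

Lemma ev_inv_mulXn (p : {poly k}) N : (size p <= N)%N ->
  ev_inv p * s ^+ N = tofrac (\sum_(i < N) p`_i *: 'X^(N - i)).
Proof.
move=> pN; rewrite ev_invE.
rewrite (@horner_coef_wide _ N) ?size_map_poly // big_distrl rmorph_sum.
apply: eq_bigr => i _ /=; rewrite coef_map -mul_polyC tofracM -svarXn.
have -> : s ^+ N = s ^+ i * s ^+ (N - i) by rewrite -exprD subnKC // ltnW.
by rewrite exprVn mulrA mulfVK ?expf_neq0 ?svar_neq0.
Qed.

Lemma cst_svarXn_ev_inv (c : k) (m : nat) (p : {poly k}) :
  c != 0 -> cst c * s ^+ m = ev_inv p -> m = 0%N /\ p.[0] = c.
Proof.
move=> c0 E; set N := (size p).+1.
have /eqP : tofrac (c *: 'X^(m + N)) = tofrac (\sum_(i < N) p`_i *: 'X^(N - i)).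
  by rewrite -ev_inv_mulXn // -E -mulrA -exprD -mul_polyC tofracM svarXn.
rewrite tofrac_eq => /eqP /(congr1 (fun q : {poly k} => q`_(m + N))) /=.
rewrite coefZ coefXn eqxx mulr1 coef_sum big_ord_recl /= big1 ?addr0 => [|i _]; last first.
  rewrite coefZ coefXn; case: eqP => [|_]; last by rewrite mulr0.
  by rewrite /bump /N leq0n; lia.
rewrite coefZ coefXn subn0 -{2}[N]add0n eqn_add2r.
case: eqP => [-> | _]; last by rewrite mulr0 => c00; rewrite c00 eqxx in c0.
by rewrite mulr1 horner_coef0 => ->.
Qed.
End RationalFunctions.

Arguments cstm {k}.

Section Iota.
Variables (k : fieldType) (n d : nat).
Hypothesis d_gt0 : (0 < d)%N.
Local Notation F := {fraction {poly k}}.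
Local Notation s := (svar k).
Implicit Types A B Z : 'M[k]_n.

Definition sdiag : 'M[F]_n := diag_mx (\row_i s ^+ (i %/ d)).

(* Unlike iotaL, iota_mx is multiplicative on all matrices; the two agree on
   matrices supported on congruent indices (iotaL_iota_mx).  It is locked so that
   unification never unfolds it. *)
Fact iota_mx_key : unit. Proof. by []. Qed.
Definition iota_mx A : 'M[F]_n :=
  locked_with iota_mx_key (sdiag *m map_mx cstm A *m invmx sdiag).

Lemma iota_mx_def A : iota_mx A = sdiag *m map_mx cstm A *m invmx sdiag.
Proof. exact: unlock. Qed.

Lemma sdiag_unit : sdiag \in unitmx.
Proof. by apply: diag_mx_unit => i; rewrite mxE unitfE expf_neq0 ?svar_neq0. Qed.

Lemma iota_mxE A i j : iota_mx A i j = s ^+ (i %/ d) * cst (A i j) / s ^+ (j %/ d).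
Proof.
rewrite iota_mx_def invmx_diag_mx => [|l]; last by rewrite mxE unitfE expf_neq0 ?svar_neq0.
by rewrite mul_mx_diag mul_diag_mx !mxE.
Qed.

Lemma iota_mxM A B : iota_mx (A *m B) = iota_mx A *m iota_mx B.
Proof. by rewrite !iota_mx_def map_mxM !mulmxA mulmxKV ?sdiag_unit. Qed.

Lemma iota_mx_inj : injective iota_mx.
Proof.
move=> A B; rewrite !iota_mx_def => /(can_inj (mulmxKV sdiag_unit)).
by move/(can_inj (mulKmx sdiag_unit))/map_mx_inj.
Qed.

Lemma iota_mx_unit A : (iota_mx A \in unitmx) = (A \in unitmx).
Proof. by rewrite iota_mx_def !unitmx_mul map_unitmx unitmx_inv sdiag_unit andbT. Qed.

Lemma iota_mx_inv A : invmx (iota_mx A) = iota_mx (invmx A).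
Proof.
have [uA|nuA] := boolP (A \in unitmx); last first.
  by rewrite !invmx_out ?inE ?iota_mx_unit.
by rewrite !iota_mx_def invmx_conj ?map_unitmx ?sdiag_unit // map_invmx.
Qed.

Lemma iota_mx_conj A B :
  iota_mx A *m iota_mx B *m invmx (iota_mx A) = iota_mx (A *m B *m invmx A).
Proof. by rewrite iota_mx_inv -!iota_mxM. Qed.

Lemma iota_mx_diag (r : 'rV[k]_n) : iota_mx (diag_mx r) = diag_mx (map_mx cstm r).
Proof. by rewrite iota_mx_def map_diag_mx -diag_mx_comm mulmxK ?sdiag_unit. Qed.

Lemma iotaL_iota_mx A : vanishes_on (incongr_d d) A -> iotaL d A = iota_mx A.
Proof.
move=> hA; apply/matrixP => i j; rewrite iota_mxE mxE.
have [cij|ncij] := boolP (congr_d d i j); last first.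
  by rewrite (hA i j ncij) cstE rmorph0 !(mul0r, mulr0).
have -> : ((i%:Z - j%:Z) %/ d)%Z = (i %/ d)%:Z - (j %/ d)%:Z.
  rewrite {1}(divn_eq i d) {1}(divn_eq j d) (eqP cij) !PoszD !PoszM.
  by rewrite [X in _ - X]addrC addrKA -mulrBl mulzK // eqz_nat -lt0n.
by rewrite expfzDr ?svar_neq0 // -invr_expz mulrA [_ * s ^ _]mulrC.
Qed.

Lemma in_G0_iotaL g : in_G0 d g -> iotaL d g = iota_mx g.
Proof. by case=> _ /iotaL_iota_mx. Qed.

Lemma iotaL_iota_mxP (Pr : 'M[k]_n -> Prop) Z : vanishes_on (incongr_d d) Z ->
  (exists g, in_G0 d g /\ iota_mx Z = iotaL d g /\ Pr g) <-> Z \in unitmx /\ Pr Z.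
Proof.
move=> hZ; split => [[g [G0g [E Prg]]]|[uZ PrZ]].
  by move: E; rewrite in_G0_iotaL // => /iota_mx_inj ->; case: G0g.
by exists Z; rewrite iotaL_iota_mx.
Qed.
End Iota.

Section CongruenceChains.
Variables (n d : nat) (R : 'I_n -> 'I_n -> Prop).
Hypothesis d_gt0 : (0 < d)%N.
Hypothesis R_trans : forall i l j, R i l -> R l j -> R i j.
Hypothesis R_step : forall i j : 'I_n, nat_of_ord j = (i + d)%N -> R i j.

Lemma congr_d_chain i j : congr_d d i j -> (i < j)%N -> R i j.
Proof.
move=> cij lt_ij; have [m jE] : exists m, nat_of_ord j = (i + m.+1 * d)%N.
  have le_ij := ltnW lt_ij.
  have dvd_d : (d %| j - i)%N by rewrite -eqn_mod_dvd // eq_sym.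
  have q_gt0 : (0 < (j - i) %/ d)%N by rewrite divn_gt0 // dvdn_leq ?subn_gt0.
  by exists ((j - i) %/ d).-1; rewrite prednK // divnK // subnKC.
elim: m j jE {cij lt_ij} => [|m IHm] j jE; first by apply: R_step; rewrite jE mul1n.
have lt_l : (i + m.+1 * d < n)%N by have := ltn_ord j; rewrite jE mulSn; lia.
by apply: (R_trans (IHm (Ordinal lt_l) erefl)); apply: R_step; rewrite jE /= mulSn; lia.
Qed.
End CongruenceChains.

Section LeviSubgroup.
Variables (k : fieldType) (n d : nat).
Hypothesis d_gt0 : (0 < d)%N.
Local Notation F := {fraction {poly k}}.
Local Notation iota := (iota_mx d).
Local Notation G0 := (vanishes_on (incongr_d d)).
Implicit Types Z : 'M[k]_n.

Lemma in_WL_iota (w : 'M[F]_n) :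
  in_WL d w -> exists tau : 'S_n, w = iota (perm_mx tau) /\ G0 (perm_mx tau : 'M[k]_n).
Proof. by case=> tau [[_ hW] ->]; exists tau; rewrite iotaL_iota_mx. Qed.

Lemma in_Upsilon_iota (u : 'M[F]_n) : in_Upsilon d u ->
  exists U, u = iota U /\ [/\ U \in unitmx, G0 U & unitriangular (@strictly_below _) U].
Proof.
case=> U [[uU hU] [-> hpat]]; exists U; rewrite iotaL_iota_mx //; split=> //; split=> //.
split=> [i|i j lt_ji]; first by case: (hpat i i) => [->|[]]; rewrite ?eqxx.
rewrite /strictly_below in lt_ji.
by case: (hpat i j) => [->|[_ _ ? _]]; [rewrite -val_eqE gtn_eqF | lia].
Qed.

Lemma in_BLm_iota Z : G0 Z -> Z \in unitmx -> in_BLm d (iota Z) <-> lower Z.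
Proof.
move=> hZ uZ; split=> [[t [v [[r [_ tE]] [[g [G0g [vE [_ lg]]]] E]]]] | lZ].
  have {}tE : t = iota (diag_mx (\row_i r i)).
    by rewrite tE iota_mx_diag; congr diag_mx; apply/matrixP => ? i; rewrite !mxE.
  move: E; rewrite tE vE in_G0_iotaL // -iota_mxM => /iota_mx_inj ->.
  by apply: vanishes_onM => //; apply: vanishes_on_diag_mx.
have Zii_u i : Z i i \is a GRing.unit by apply: (vanishes_on_diag_unit _ _ _ _ lZ).
have uT : diag_part Z \in unitmx by apply: (diag_part_unit _ _ _ lZ).
exists (iota (diag_part Z)), (iota (invmx (diag_part Z) *m Z)); split; [|split].
- exists (fun i => Z i i); split=> [i|]; first by rewrite -unitfE.
  by rewrite iota_mx_diag; congr diag_mx; apply/matrixP => ? i; rewrite !mxE.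
- apply/(iotaL_iota_mxP d_gt0).
    by apply: vanishes_onM => //; apply/vanishes_on_invmx/vanishes_on_diag_mx.
  split; first by rewrite unitmx_mul unitmx_inv uT.
  exact: unipotent_part_unitriangular.
- by rewrite -iota_mxM mulKVmx.
Qed.
End LeviSubgroup.

Section AffineWeylConjugation.
Variables (k : fieldType) (n d : nat).
Hypothesis d_gt0 : (0 < d)%N.
Variables (sigma : 'S_n) (lam : 'I_n -> int).
Local Notation F := {fraction {poly k}}.
Local Notation s := (svar k).
Local Notation iota := (iota_mx d).
Local Notation tw := (tW k sigma lam).
Local Notation G0 := (vanishes_on (incongr_d d)).
Implicit Types (i j l a b : 'I_n) (Z : 'M[k]_n).

Lemma tw_conjE (X : 'M[F]_n) a b :
  (tw *m X *m invmx tw) a b = s ^ lam (sigma a) * X (sigma a) (sigma b) / s ^ lam (sigma b).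
Proof. by rewrite conj_perm_diag_mxE ?mxE // => i; rewrite mxE unitfE expfz_neq0 ?svar_neq0. Qed.

Lemma tw_unit : tw \in unitmx.
Proof.
by rewrite unitmx_mul unitmx_perm diag_mx_unit // => i; rewrite mxE unitfE expfz_neq0 ?svar_neq0.
Qed.

Definition mu (i : 'I_n) : int := lam i + (i %/ d)%N.

Lemma tw_iota_conjE Z a b : (tw *m iota Z *m invmx tw) a b =
  cst (Z (sigma a) (sigma b)) * s ^ (mu (sigma a) - mu (sigma b)).
Proof.
rewrite tw_conjE iota_mxE /mu opprD addrACA !expfzDr ?svar_neq0 // -!invr_expz -!exprnP.
ring.
Qed.

(* tw maps the root alpha_ij of L to a positive affine root. *)
Definition tw_pos_root (i j : 'I_n) : Prop :=
  mu j < mu i \/ mu j = mu i /\ ((sigma^-1)%g i < (sigma^-1)%g j)%N.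

Lemma tw_pos_root_trans i l j : tw_pos_root i l -> tw_pos_root l j -> tw_pos_root i j.
Proof. by rewrite /tw_pos_root; lia. Qed.

Hypothesis hpos : forall (i j : 'I_n), (nat_of_ord j = i + d)%N -> forall a : k,
  in_I (tw *m rootelt i j (-1) a *m invmx tw).

Lemma tw_pos_root_step i j : nat_of_ord j = (i + d)%N -> tw_pos_root i j.
Proof.
move=> ji; have nij : i != j by apply/eqP => eij; move: ji; rewrite eij; lia.
have [_ _ _ [P [q [q0 [EM Ptri]]]]] := hpos ji 1.
set a := (sigma^-1)%g i; set b := (sigma^-1)%g j.
have /(svar_expz_ps q0) [ge0 gt0] : s ^ (mu i - mu j) = (tofrac q)^-1 * tofrac (P a b).
  move: (congr1 (fun M : 'M[F]_n => M a b) EM); rewrite /= tw_conjE !mxE /a /b !permKV (negbTE nij).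
  rewrite !eqxx add0r mulr1 cstE rmorph1 mul1r => <-.
  rewrite /mu ji -{2}(mul1n d) divnDMl // PoszD -!expfzDr ?svar_neq0 //.
  by rewrite invr_expz -expfzDr ?svar_neq0 //; congr (_ ^ _); ring.
rewrite /tw_pos_root; case: (ltngtP a b) => [ab|ba|/val_inj ab].
- by move: ge0; rewrite subr_ge0 le_eqVlt => /orP[/eqP->|->]; [right|left].
- by left; rewrite -subr_gt0 gt0 // Ptri.
- by move: nij; rewrite -(permKV sigma i) -(permKV sigma j) -/a -/b ab eqxx.
Qed.

Lemma tw_pos_root_congr i j : congr_d d i j -> (i < j)%N -> tw_pos_root i j.
Proof. exact: (congr_d_chain d_gt0 tw_pos_root_trans tw_pos_root_step). Qed.

Lemma congr_d_of_neq0 Z i j : G0 Z -> Z i j != 0 -> congr_d d i j.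
Proof. by move=> hZ; apply: contraR => /hZ ->. Qed.

Lemma mu_le_of_lower Z i j : G0 Z -> lower Z -> Z i j != 0 -> mu i <= mu j.
Proof.
move=> hZ lZ nz; have cji : congr_d d j i by rewrite /congr_d eq_sym; exact: congr_d_of_neq0 hZ nz.
case: (ltngtP i j) => [/lZ Zij|lt_ji|/val_inj->//]; first by rewrite Zij eqxx in nz.
by case: (tw_pos_root_congr cji lt_ji) => [/ltW|[->]].
Qed.

Definition tw_iota_poly Z : 'M[{poly k}]_n :=
  \matrix_(a, b) (Z (sigma a) (sigma b) *: 'X^(absz (mu (sigma b) - mu (sigma a)))).

Lemma tw_iota_conj_ev_inv Z : G0 Z -> lower Z ->
  tw *m iota Z *m invmx tw = map_mx (@ev_inv k) (tw_iota_poly Z).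
Proof.
move=> hZ lZ; apply/matrixP => a b; rewrite tw_iota_conjE !mxE ev_invZXn.
have [->|nz] := eqVneq (Z (sigma a) (sigma b)) 0; first by rewrite cstE rmorph0 !mul0r.
by rewrite gez0_abs ?subr_ge0 ?opprB // (mu_le_of_lower hZ lZ nz).
Qed.

Lemma tw_iota_poly_lower0 Z a b : G0 Z -> lower Z -> (a < b)%N ->
  (tw_iota_poly Z a b).[0] = 0.
Proof.
move=> hZ lZ lt_ab; rewrite mxE hornerZ hornerXn.
have [->|nz] := eqVneq (Z (sigma a) (sigma b)) 0; first by rewrite mul0r.
have cba : congr_d d (sigma b) (sigma a) by rewrite /congr_d eq_sym; exact: congr_d_of_neq0 hZ nz.
have lt_ba : (sigma b < sigma a)%N.
  rewrite ltn_neqAle (inj_eq (@ord_inj n)) (inj_eq perm_inj) leqNgt.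
  by rewrite neq_ltn lt_ab orbT; apply: contra nz => /lZ ->.
case: (tw_pos_root_congr cba lt_ba) => [lt_mu|[_]]; last by rewrite !permK ltnNge ltnW.
suff : (0 < absz (mu (sigma b) - mu (sigma a)))%N by case: absz => // m; rewrite expr0n mulr0.
by rewrite absz_gt0 subr_eq0 gt_eqF.
Qed.

Lemma lower_in_Iminus Z : G0 Z -> Z \in unitmx -> lower Z ->
  in_Iminus (tw *m iota Z *m invmx tw).
Proof.
move=> hZ uZ lZ; split.
- by rewrite 2!unitmx_mul iota_mx_unit uZ unitmx_inv tw_unit.
- exists (tw_iota_poly (invmx Z)).
  rewrite invmx_conj ?iota_mx_unit ?tw_unit // iota_mx_inv.
  by apply: tw_iota_conj_ev_inv; apply: vanishes_on_invmx.
- exists (tw_iota_poly Z); split; first exact: tw_iota_conj_ev_inv.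
  by move=> a b; apply: tw_iota_poly_lower0.
Qed.

Lemma in_Iminus_lower Z : G0 Z -> in_Iminus (tw *m iota Z *m invmx tw) -> lower Z.
Proof.
move=> hZ [_ _ [P [EP Ptri]]] i j lt_ij; apply/eqP; apply: contraT => nz.
have pos := tw_pos_root_congr (congr_d_of_neq0 hZ nz) lt_ij.
have ge0 : 0 <= mu i - mu j by rewrite subr_ge0; case: pos => [/ltW|[->]].
have := congr1 (fun M : 'M[F]_n => M (sigma^-1 i)%g (sigma^-1 j)%g) EP.
rewrite /= tw_iota_conjE !permKV mxE -(gez0_abs ge0) -exprnP.
case/(cst_svarXn_ev_inv nz) => /eqP; rewrite absz_eq0 subr_eq0 => /eqP eq_mu P0.
case: pos => [|[_ lt_ab]]; first by rewrite eq_mu ltxx.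
by move: nz; rewrite -P0 Ptri ?eqxx.
Qed.

Lemma Iminus_iff_BLm L g : G0 L -> L \in unitmx -> in_Bphi d g ->
  in_Iminus (tw *m iota L *m g *m invmx (tw *m iota L)) <->
  in_BLm d (iota L *m g *m invmx (iota L)).
Proof.
move=> hL uL [G [[uG hG] [-> _]]]; rewrite in_G0_iotaL //.
rewrite conj_mulmx ?iota_mx_unit //; last exact: tw_unit.
have hZ : G0 (L *m G *m invmx L).
  by apply: vanishes_onM => //; [exact: vanishes_onM | exact: vanishes_on_invmx].
have uZ : L *m G *m invmx L \in unitmx by rewrite !unitmx_mul uL uG unitmx_inv uL.
rewrite iota_mx_conj in_BLm_iota //; split; first exact: in_Iminus_lower.
exact: lower_in_Iminus.
Qed.
End AffineWeylConjugation.

Section IdentityBlock.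
Variables (k : fieldType) (n d : nat).
Implicit Types A B G : 'M[k]_n.

Lemma idblockM A B : idblock d A -> idblock d B -> idblock d (A *m B).
Proof.
move=> hA hB i j ij; rewrite mxE; have [lt_id|ge_id] := boolP (i < d)%N.
  rewrite (bigD1 i) //= big1 ?addr0 => [|l nli].
    by rewrite hA ?lt_id // eqxx mul1r hB ?lt_id.
  by rewrite hA ?lt_id // eq_sym (negbTE nli) mul0r.
have lt_jd : (j < d)%N by move: ij; rewrite (negbTE ge_id).
rewrite (bigD1 j) //= big1 ?addr0 => [|l nlj].
  by rewrite hB ?lt_jd ?orbT // eqxx mulr1 hA ?lt_jd ?orbT.
by rewrite hB ?lt_jd ?orbT // (negbTE nlj) mulr0.
Qed.

Lemma idblock_diag_part G : idblock d G -> idblock d (diag_part G).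
Proof.
move=> hG i j ij; rewrite !mxE; case: (eqVneq i j) ij => [<- ij|_ _]; last by rewrite mulr0n.
by rewrite (hG i i ij) eqxx.
Qed.

Lemma idblock_unipotent_part G : (forall i, G i i != 0) -> idblock d G ->
  idblock d (invmx (diag_part G) *m G).
Proof.
move=> Gii hG i j ij; rewrite invmx_diag_mx => [|l]; last by rewrite mxE unitfE.
rewrite mul_diag_mx !mxE (hG i j ij); case: (eqVneq i j) ij => [<- ij|_ _]; last by rewrite mulr0.
by rewrite (hG i i ij) eqxx invr1 mulr1.
Qed.
End IdentityBlock.

Section Factorization.
Variables (k : fieldType) (n d : nat).
Hypothesis d_gt0 : (0 < d)%N.
Local Notation G0 := (vanishes_on (incongr_d d)).
Local Notation iota := (iota_mx d).
Implicit Types G T V : 'M[k]_n.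

Variables (tau : 'S_n) (U : 'M[k]_n).
Hypotheses (G0W : G0 (perm_mx tau : 'M[k]_n)) (uU : U \in unitmx) (G0U : G0 U).
Hypothesis unitriU : unitriangular (@strictly_below _) U.
Local Notation W := (perm_mx tau : 'M[k]_n).
Local Notation Y T V := (invmx T *m U *m T *m V *m invmx U).

Lemma in_BLm_conj_iota G : G0 G -> G \in unitmx ->
  in_BLm d (iota W *m iota U *m iota G *m invmx (iota W *m iota U)) <->
  lower (W *m U *m G *m invmx (W *m U)).
Proof.
move=> hG uG; have uWU : W *m U \in unitmx by rewrite unitmx_mul unitmx_perm.
rewrite -iota_mxM iota_mx_conj in_BLm_iota //; last by rewrite 2!unitmx_mul uWU uG unitmx_inv uWU.
have hWU : G0 (W *m U) by apply: vanishes_onM.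
by apply: vanishes_onM => //; [apply: vanishes_onM | apply: vanishes_on_invmx].
Qed.

Lemma lower_conj_iff T V : diagonal T -> T \in unitmx ->
  lower (W *m U *m (T *m V) *m invmx (W *m U)) <-> lower (W *m Y T V *m invmx W).
Proof.
move=> dT uT; have uW : W \in unitmx := unitmx_perm _ tau.
have -> : W *m U *m (T *m V) *m invmx (W *m U) =
    (W *m T *m invmx W) *m (W *m Y T V *m invmx W).
  by rewrite invmxM // !mulmxA mulmxKV // mulmxK.
rewrite -{1}(diag_partE dT) conj_perm_diag_mx; apply: vanishes_on_diag_mulmx => i.
by rewrite !mxE (vanishes_on_diag_unit _ _ _ _ dT).
Qed.

Lemma iota_Y T V :
  invmx (iota T) *m iota U *m iota T *m iota V *m invmx (iota U) = iota (Y T V).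
Proof. by rewrite !iota_mx_inv -!iota_mxM. Qed.

Lemma Y_unitriangular T V : G0 T -> diagonal T -> T \in unitmx ->
  G0 V -> V \in unitmx -> unitriangular (@strictly_below _) V ->
  [/\ G0 (Y T V), Y T V \in unitmx & unitriangular (@strictly_below _) (Y T V)].
Proof.
move=> hT dT uT hV uV unitriV; split.
- apply: vanishes_onM => //; last exact: vanishes_on_invmx.
  do 2 apply: vanishes_onM => //; apply: vanishes_onM => //; exact: vanishes_on_invmx.
- by rewrite !unitmx_mul !unitmx_inv uT uU uV.
- apply: unitriangularM => //; last exact: unitriangular_invmx.
  apply: unitriangularM => //; apply: unitriangular_conj => //.
  exact: vanishes_on_diagonal.
Qed.

Lemma factorization_of_Bphi g : in_Bphi d g ->
  in_BLm d (iota W *m iota U *m g *m invmx (iota W *m iota U)) ->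
  exists t v, [/\ in_Tphi d t, in_Uphi d v, g = t *m v,
    in_UL d (invmx t *m iota U *m t *m v *m invmx (iota U)) &
    in_ULm d (iota W *m (invmx t *m iota U *m t *m v *m invmx (iota U)) *m invmx (iota W))].
Proof.
case=> G [[uG hG] [-> [idG upG]]]; rewrite in_G0_iotaL // in_BLm_conj_iota // => lZ.
have Gii i : G i i != 0 by rewrite -unitfE (vanishes_on_diag_unit _ _ _ _ upG).
set T := diag_part G; set V := invmx T *m G.
have dT : diagonal T by apply: vanishes_on_diag_mx.
have hT : G0 T by apply: vanishes_on_diag_mx.
have uT : T \in unitmx by apply: (diag_part_unit _ _ _ upG).
have hV : G0 V by apply: vanishes_onM => //; apply: vanishes_on_invmx.
have uV : V \in unitmx by rewrite unitmx_mul unitmx_inv uT.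
have unitriV : unitriangular (@strictly_below _) V by apply: unipotent_part_unitriangular.
have GE : G = T *m V by rewrite mulKVmx.
have [hY uY unitriY] := Y_unitriangular hT dT uT hV uV unitriV.
exists (iota T), (iota V); rewrite iota_Y iota_mx_conj; split.
- apply/(iotaL_iota_mxP d_gt0) => //; split=> //; split=> //; exact: idblock_diag_part.
- apply/(iotaL_iota_mxP d_gt0) => //; split=> //; split=> //; exact: idblock_unipotent_part.
- by rewrite -iota_mxM -GE.
- by apply/(iotaL_iota_mxP d_gt0).
apply/(iotaL_iota_mxP d_gt0).
  apply: vanishes_onM => //; last exact: vanishes_on_invmx.
  exact: vanishes_onM.
split; first by rewrite 2!unitmx_mul unitmx_inv unitmx_perm uY.
split=> [i|]; first by rewrite conj_perm_mxE unitriY.1.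
by apply/(lower_conj_iff V dT uT); rewrite -GE.
Qed.

Lemma Bphi_of_factorization t v : in_Tphi d t -> in_Uphi d v ->
  in_ULm d (iota W *m (invmx t *m iota U *m t *m v *m invmx (iota U)) *m invmx (iota W)) ->
  in_Bphi d (t *m v) /\ in_BLm d (iota W *m iota U *m (t *m v) *m invmx (iota W *m iota U)).
Proof.
case=> T [G0T [-> [idT dT]]] [V [G0V [-> [idV [_ upV]]]]].
rewrite !in_G0_iotaL // iota_Y iota_mx_conj -iota_mxM.
case=> Z [G0Z [E [_ lZ]]]; move: E; rewrite in_G0_iotaL // => /iota_mx_inj ZE.
have [[uT hT] [uV hV]] := (G0T, G0V).
have upT : upper T by apply: vanishes_on_diagonal.
have hTV : G0 (T *m V) by apply: vanishes_onM.
have uTV : T *m V \in unitmx by rewrite unitmx_mul uT uV.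
split.
  exists (T *m V); rewrite in_G0_iotaL //; split=> //; split=> //; split.
    exact: idblockM.
  exact: vanishes_onM.
rewrite in_BLm_conj_iota // (lower_conj_iff V dT uT) ZE.
exact: lZ.
Qed.
End Factorization.

Theorem lemma10p4 (k : fieldType) (n d : nat) (hd1 : (1 <= d)%N) (hdn : (d <= n)%N)
  (sigma : 'S_n) (lam : 'I_n -> int)
  (* tw alpha > 0 for all alpha = alpha_{i,i+d} - 1 in Delta(L), i.e. the root
     subgroup tw U_alpha tw^-1 = U_{tw alpha} is contained in I *)
  (hpos : forall (i j : 'I_n), (nat_of_ord j = i + d)%N -> forall a : k,
     in_I (tW k sigma lam *m rootelt i j (-1) a *m invmx (tW k sigma lam)))
  (w u : 'M[{fraction {poly k}}]_n) (hw : in_WL d w) (hu : in_Upsilon d u) :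
  let l := w *m u in
  let x := tW k sigma lam *m l in
  forall g : 'M[{fraction {poly k}}]_n,
    ((in_Bphi d g /\ in_Iminus (x *m g *m invmx x)) <->
     (in_Bphi d g /\ in_BLm d (l *m g *m invmx l))) /\
    ((in_Bphi d g /\ in_BLm d (l *m g *m invmx l)) <->
     (exists t v, [/\ in_Tphi d t, in_Uphi d v, g = t *m v,
        in_UL d (invmx t *m u *m t *m v *m invmx u) &
        in_ULm d (w *m (invmx t *m u *m t *m v *m invmx u) *m invmx w)])).
Proof.
(* The argument works for every d >= 1. *)
move=> l x g; have d_gt0 : (0 < d)%N := hd1.
have [tau [wE G0W]] := in_WL_iota d_gt0 hw.
have [U [uE [uU G0U unitriU]]] := in_Upsilon_iota d_gt0 hu.
have hWU : vanishes_on (incongr_d d) (perm_mx tau *m U) by apply: vanishes_onM.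
have uWU : perm_mx tau *m U \in unitmx by rewrite unitmx_mul unitmx_perm.
rewrite /x /l {}wE {}uE; split.
  have IB := Iminus_iff_BLm d_gt0 hpos hWU uWU.
  by rewrite -iota_mxM; split=> -[Bg h]; split=> //; apply/(IB _ Bg).
split=> [[Bg] | [t [v [Tt Uv -> _ ULm]]]]; first exact: factorization_of_Bphi.
exact: Bphi_of_factorization.
Qed.
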